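(* Let $P$ be a convex polygon with no two edges parallel, and let $e_i\prec e_j$. Then $\mathrm{disprod}_{\ell_i,\ell_j}$ is strictly unimodal on $[v_{j+1}\circlearrowright v_i]$: $\mathrm{disprod}_{\ell_i,\ell_j}(X)$ strictly increases as $X$ travels clockwise along $\partial P$ from $v_{j+1}$ to $Z_i^j$, and strictly decreases as $X$ travels clockwise along $\partial P$ from $Z_i^j$ to $v_i$.
   Context: $P$ is a compact convex polygon with boundary $\partial P$, edges $e_1,\ldots,e_n$ in clockwise order and vertices $v_1,\ldots,v_n$, $e_i$ being the open segment from $v_i$ to $v_{i+1}$ (indices mod $n$). $\ell_i$ is the line containing $e_i$, $\mathsf{I}_{i,j}=\ell_i\cap\ell_j$. $d_l(X)$ is the distance from $X$ to the line $l$, and $\mathrm{disprod}_{l,l'}(X)=d_l(X)d_{l'}(X)$. For distinct edges, $e_i\prec e_j$ means $\mathsf{I}_{i,j}=v_i+t(v_{i+1}-v_i)$ for some $t\ge1$ (i.e. $\mathsf{I}_{i,j}$ lies between $e_i$ and $e_j$ clockwise; equivalently the clockwise turning angle from direction $v_{i+1}-v_i$ to $v_{j+1}-v_j$ is in $(0,\pi)$). For $e_i\prec e_j$, $Z_i^j$ denotes the unique point of $P$ at which $\mathrm{disprod}_{\ell_i,\ell_j}$ attains its maximum over $P$ (it lies on $\partial P$). $[X\circlearrowright X']$ is the closed portion of $\partial P$ from $X$ clockwise to $X'$. *)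

From mathcomp Require Import all_boot all_order all_algebra.
Set Implicit Arguments. Unset Strict Implicit. Unset Printing Implicit Defensive.
Import Order.TTheory GRing.Theory Num.Theory.
Local Open Scope ring_scope.

Section Geom.
Variable R : rcfType.
Definition pt := (R * R)%type.

Definition padd (a b : pt) : pt := (a.1 + b.1, a.2 + b.2).
Definition psub (a b : pt) : pt := (a.1 - b.1, a.2 - b.2).
Definition pscale (s : R) (a : pt) : pt := (s * a.1, s * a.2).
Definition cross (a b : pt) : R := a.1 * b.2 - a.2 * b.1.
Definition dot (a b : pt) : R := a.1 * b.1 + a.2 * b.2.

Definition V (v : nat -> pt) (n k : nat) : pt := v (k %% n)%N.
Definition edir (v : nat -> pt) (n k : nat) : pt := psub (V v n k.+1) (V v n k).

(* Convex polygon with vertices listed in clockwise order: every other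
   vertex lies strictly to the right of each directed edge v_i -> v_{i+1}. *)
Definition convex_cw_polygon (v : nat -> pt) (n : nat) : Prop :=
  (3 <= n)%N /\
  forall i k, (i < n)%N -> (k < n)%N -> k != i -> k != (i.+1 %% n)%N ->
    cross (edir v n i) (psub (v k) (V v n i)) < 0.

Definition inP (v : nat -> pt) (n : nat) (X : pt) : Prop :=
  forall i, (i < n)%N -> cross (edir v n i) (psub X (V v n i)) <= 0.

Definition no_parallel_edges (v : nat -> pt) (n : nat) : Prop :=
  forall i j, (i < n)%N -> (j < n)%N -> i != j -> cross (edir v n i) (edir v n j) != 0.

Definition dist_line (A B X : pt) : R :=
  `| cross (psub B A) (psub X A) | / Num.sqrt (dot (psub B A) (psub B A)).

Definition dl (v : nat -> pt) (n k : nat) (X : pt) : R :=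
  dist_line (V v n k) (V v n k.+1) X.

Definition disprod (v : nat -> pt) (n i j : nat) (X : pt) : R :=
  dl v n i X * dl v n j X.

Definition on_line (v : nat -> pt) (n k : nat) (X : pt) : Prop :=
  cross (edir v n k) (psub X (V v n k)) = 0.

Definition prec (v : nat -> pt) (n i j : nat) : Prop :=
  i != j /\
  exists t : R, 1 <= t /\ on_line v n j (padd (V v n i) (pscale t (edir v n i))).

Definition arc_len (n a b : nat) : nat := ((b + n - a) %% n)%N.

(* on_arc v n a b t X : X is the point of the clockwise boundary arc
   [v_a -> v_b] at arc parameter t in [0, arc_len n a b]; the parameter
   k + s (k in nat, s in [0,1]) denotes the point v_{a+k} + s (v_{a+k+1} - v_{a+k}). *)
Definition on_arc (v : nat -> pt) (n a b : nat) (t : R) (X : pt) : Prop :=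
  exists (k : nat) (s : R),
    ((k < arc_len n a b)%N \/ (k = arc_len n a b /\ s = 0)) /\
    0 <= s /\ s <= 1 /\ t = k%:R + s /\
    X = padd (V v n (a + k)%N) (pscale s (edir v n (a + k)%N)).

End Geom.

(* Write u = height i and w = height j for the (scaled) distances to l_i and
   l_j; both vanish at I = l_i /\ l_j, and on P disprod is a positive multiple
   of u * w.  Every edge e_m of the arc [v_(j+1) -> v_i] has I strictly on the
   inner side of l_m, so in the (u, w)-plane P lies in a half-plane
   al_m * w - be_m * u <= G_m with G_m > 0 whose boundary carries e_m.  Seen from
   I the arc is swept monotonically, and u * w is strictly quasi-concave on the
   quadrant; hence disprod has no local minimum inside the arc.  The maximiser
   Z lies on the arc, because the ray from I through Z leaves P through the arc
   and u * w grows along that ray. *)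

From mathcomp Require Import all_boot all_order all_algebra.
From mathcomp Require Import ring lra zify.
Set Implicit Arguments. Unset Strict Implicit. Unset Printing Implicit Defensive.
Import Order.TTheory GRing.Theory Num.Theory.
Local Open Scope ring_scope.

Section RealArith.
Variable R : realFieldType.
Implicit Types u w p q m D G al be : R.

Lemma ltr_ratio u w u' w' : 0 < u + w -> 0 < u' + w' ->
  (u' / (u' + w') < u / (u + w)) = (u' * w < u * w').
Proof.
move=> h h'; rewrite ltr_pdivrMr // mulrAC ltr_pdivlMr //.
by rewrite !mulrDr [u * u']mulrC ltrD2l.
Qed.

(* Strict quasi-concavity of [u * w] on the quadrant: the point
   [(q u1 + p u3, q w1 + p w3) / (p + q)] of the open chord lies strictly above
   the level [m] of both ends. *)
Lemma mul_chord_gt u1 w1 u3 w3 m p q :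
  0 <= u1 -> 0 <= w1 -> 0 <= u3 -> 0 <= w3 -> 0 <= m -> 0 < p -> 0 < q ->
  m <= u1 * w1 -> m <= u3 * w3 -> u3 * w1 < u1 * w3 ->
  (p + q) ^+ 2 * m < (q * u1 + p * u3) * (q * w1 + p * w3).
Proof.
move=> hu1 hw1 hu3 hw3 hm hp hq h1 h3 hr.
set s := u1 * w3 + u3 * w1.
have hs0 : 0 <= s by apply: addr_ge0; apply: mulr_ge0.
have hsq : 4 * ((u1 * w1) * (u3 * w3)) < s * s.
  have -> : s * s = 4 * ((u1 * w1) * (u3 * w3)) + (u1 * w3 - u3 * w1) ^+ 2.
    by rewrite /s; ring.
  by rewrite ltrDl exprn_gt0 // subr_gt0.
have hs : 2 * m < s.
  rewrite ltNge; apply/negP => hle.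
  have : s * s <= (2 * m) * (2 * m) by apply: ler_pM.
  have : m * m <= (u1 * w1) * (u3 * w3) by apply: ler_pM.
  nra.
have -> : (q * u1 + p * u3) * (q * w1 + p * w3)
    = q ^+ 2 * (u1 * w1) + p ^+ 2 * (u3 * w3) + p * q * s by rewrite /s; ring.
have -> : (p + q) ^+ 2 * m = q ^+ 2 * m + p ^+ 2 * m + p * q * (2 * m) by ring.
apply: ler_ltD; first by apply: lerD; apply: ler_wpM2l => //; exact: sqr_ge0.
by rewrite ltr_pM2l // mulr_gt0.
Qed.

(* The three points lie in the closed quadrant, in strictly decreasing angular
   order; the half-plane [al * w - be * u <= G] contains them all and the middle
   one is on its boundary.  The chord from the first to the third point meets
   the ray through the middle one inside the half-plane, hence not beyond it. *)
Lemma mul_no_interior_min G al be u1 w1 u2 w2 u3 w3 :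
  0 < G -> 0 <= u1 -> 0 <= w1 -> 0 <= u2 -> 0 <= w2 -> 0 <= u3 -> 0 <= w3 ->
  al * w1 - be * u1 <= G -> al * w2 - be * u2 = G -> al * w3 - be * u3 <= G ->
  u2 * w1 < u1 * w2 -> u3 * w2 < u2 * w3 -> u3 * w1 < u1 * w3 ->
  u1 * w1 < u2 * w2 \/ u3 * w3 < u2 * w2.
Proof.
move=> hG hu1 hw1 hu2 hw2 hu3 hw3 P1 P2 P3 h12 h23 h13.
set p := u1 * w2 - u2 * w1; set q := u2 * w3 - u3 * w2.
have hp : 0 < p by rewrite subr_gt0.
have hq : 0 < q by rewrite subr_gt0.
set U := q * u1 + p * u3; set W := q * w1 + p * w3.
have eUW : U * w2 = W * u2 by rewrite /U /W /p /q; ring.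
have hPhi : al * W - be * U <= (p + q) * G.
  have -> : al * W - be * U = q * (al * w1 - be * u1) + p * (al * w3 - be * u3).
    by rewrite /U /W; ring.
  rewrite (_ : (p + q) * G = q * G + p * G); last by ring.
  by apply: lerD; apply: ler_wpM2l => //; apply: ltW.
have hUb : U * G <= (p + q) * u2 * G.
  have -> : U * G = (al * W - be * U) * u2.
    by rewrite -P2; transitivity (al * (W * u2) - be * U * u2); [rewrite -eUW|]; ring.
  by rewrite mulrAC; apply: ler_wpM2r.
have hWb : W * G <= (p + q) * w2 * G.
  have -> : W * G = (al * W - be * U) * w2.
    by rewrite -P2; transitivity (al * W * w2 - be * (W * u2)); [|rewrite -eUW]; ring.
  by rewrite mulrAC; apply: ler_wpM2r.
rewrite !ler_pM2r // in hUb hWb.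
have hU : 0 <= U by apply: addr_ge0; apply: mulr_ge0 => //; apply: ltW.
have hW : 0 <= W by apply: addr_ge0; apply: mulr_ge0 => //; apply: ltW.
have hUW : U * W <= (p + q) ^+ 2 * (u2 * w2).
  by rewrite expr2 mulrACA; apply: ler_pM.
case: (ltP (u1 * w1) (u2 * w2)) => h1; first by left.
case: (ltP (u3 * w3) (u2 * w2)) => h3; first by right.
have := mul_chord_gt hu1 hw1 hu3 hw3 (mulr_ge0 hu2 hw2) hp hq h1 h3 h13.
by rewrite -/U -/W => /lt_le_trans /(_ hUW); rewrite ltxx.
Qed.

Lemma mul_ray_max_eq G al be uX wX uZ wZ :
  0 < G -> 0 < uZ -> 0 < wZ -> 0 <= uX -> 0 <= wX -> uZ * wX = uX * wZ ->
  al * wX - be * uX = G -> al * wZ - be * uZ <= G ->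
  uX * wX <= uZ * wZ -> uX = uZ /\ wX = wZ.
Proof.
move=> hG huZ hwZ huX hwX e eX hZ hle.
have hu : uZ * G <= uX * G.
  have -> : uZ * G = uX * (al * wZ - be * uZ).
    by rewrite -eX; transitivity (al * (uZ * wX) - be * uX * uZ); [|rewrite e]; ring.
  exact: ler_wpM2l.
have hw : wZ * G <= wX * G.
  have -> : wZ * G = wX * (al * wZ - be * uZ).
    by rewrite -eX; transitivity (al * wX * wZ - be * (uX * wZ)); [|rewrite -e]; ring.
  exact: ler_wpM2l.
rewrite !ler_pM2r // in hu hw.
split; nra.
Qed.

Lemma apex_gt0 D x y hI hB hJ : 0 < D -> 0 <= x -> 0 <= y -> D < x + y ->
  0 < hB -> 0 < hJ -> (D - x - y) * hI + x * hB + y * hJ = 0 -> 0 < hI.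
Proof.
move=> hD hx hy hxy hB0 hJ0 e; rewrite ltNge; apply/negP => hI0.
have : 0 < x * hB + y * hJ.
  case: (ltrgt0P x) hx hxy => [hx0 _ _|//|-> _ hxy].
    by have := mulr_gt0 hx0 hB0; have := mulr_ge0 hy (ltW hJ0); lra.
  by rewrite mul0r add0r; apply: mulr_gt0 => //; lra.
have : 0 <= (D - x - y) * hI by apply: mulr_le0 => //; lra.
lra.
Qed.

Lemma affine_root01 h0 h1 : h0 <= 0 -> 0 <= h1 ->
  exists2 s : R, 0 <= s <= 1 & (1 - s) * h0 + s * h1 = 0.
Proof.
move=> H0 H1; have [->|hn] := eqVneq h0 0.
  by exists 0; rewrite ?lexx ?ler01 //; ring.
have hd : h0 - h1 < 0 by rewrite lt_def in hn *; lra.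
exists (h0 / (h0 - h1)); last by field; exact: ltr0_neq0.
by rewrite ler_ndivlMr // ler_ndivrMr // mul0r mul1r; lra.
Qed.


Lemma sign_change_nat (f : nat -> R) N : (0 < N)%N -> f 0%N <= 0 -> 0 <= f N ->
  exists k, [/\ (k < N)%N, f k <= 0 & 0 <= f k.+1].
Proof.
elim: N => // N IH _ h0 hN.
have [hfN|hfN] := leP (f N) 0; first by exists N.
have [N0|N_gt0] := posnP N; first by move: hfN; rewrite N0 ltNge h0.
by have [k [hk ? ?]] := IH N_gt0 h0 (ltW hfN); exists k; split => //; apply: ltnW.
Qed.

Lemma nat_frac_split N (t : R) : (0 < N)%N -> 0 <= t <= N%:R ->
  exists k s, [/\ (k < N)%N, 0 <= s <= 1 & t = k%:R + s].
Proof.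
elim: N t => // N IH t _ /andP[t_ge0 t_le].
have [N0|N_gt0] := posnP N.
  by exists 0%N, t; rewrite add0r t_ge0 -[1]/(1%:R) -N0.
have [tN|Nt] := leP t N%:R.
  have [k [s [hk hs ->]]] := IH t N_gt0 (introT andP (conj t_ge0 tN)).
  by exists k, s; split => //; apply: ltnW.
exists N, (t - N%:R); split => //; last by rewrite addrC subrK.
by move: t_le; rewrite -natr1 => ?; apply/andP; split; lra.
Qed.

Lemma natr_frac_le k1 s1 k2 s2 : (k1 < k2)%N -> 0 <= s2 -> s1 <= 1 ->
  k1%:R + s1 <= k2%:R + s2 :> R.
Proof.
move=> hk h2 h1; have : (k1.+1%:R : R) <= k2%:R by rewrite ler_nat.
by rewrite -natr1; lra.
Qed.

Lemma broken_line_eq (T : Type) (f : nat -> R -> T) k1 s1 k2 s2 :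
  (forall k, f k 1 = f k.+1 0) -> 0 <= s1 <= 1 -> 0 <= s2 <= 1 ->
  k1%:R + s1 = k2%:R + s2 -> f k1 s1 = f k2 s2.
Proof.
move=> f_cont; wlog le_k : k1 s1 k2 s2 / (k1 <= k2)%N.
  move=> W hs1 hs2 e; have [|lt_k] := leqP k1 k2; first by move=> le_k; apply: W.
  by symmetry; apply: W => //; apply: ltnW.
move=> /andP[s1_ge0 s1_le1] /andP[s2_ge0 s2_le1] e.
have [k2E|ne_k] := eqVneq k2 k1.
  by rewrite k2E in e *; congr f; lra.
have {le_k ne_k} lt_k : (k1 < k2)%N by rewrite ltn_neqAle eq_sym ne_k.
have [k2E|lt_k1] := eqVneq k2 k1.+1.
  rewrite k2E -natr1 in e *; have -> : s1 = 1 by lra.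
  by have -> : s2 = 0 by lra.
have : (k1.+1 < k2)%N by rewrite ltn_neqAle eq_sym lt_k1.
move=> /natr_frac_le /(_ s2_ge0 (lexx 1)); rewrite -natr1 => ?; exfalso; lra.
Qed.

Lemma broken_line_lt (f : nat -> R -> R) N :
  (forall k, f k 1 = f k.+1 0) ->
  (forall k s s', (k < N)%N -> 0 <= s -> s < s' -> s' <= 1 -> f k s' < f k s) ->
  forall k1 s1 k2 s2, (k1 < N)%N -> (k2 < N)%N -> 0 <= s1 <= 1 -> 0 <= s2 <= 1 ->
  k1%:R + s1 < k2%:R + s2 -> f k2 s2 < f k1 s1.
Proof.
move=> f_cont f_lt k1 s1 k2 + hk1 + /andP[s1_ge0 s1_le1].
elim: k2 => [|m IH] s2 hk2 hs2 lt12; case/andP: (hs2) => s2_ge0 s2_le1.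
  have k10 : k1 = 0%N.
    by apply/eqP; rewrite -leqn0 leqNgt; apply/negP => /natr_frac_le /(_ s1_ge0 s2_le1); lra.
  by move: lt12; rewrite k10 => lt12; apply: f_lt => //; lra.
have [k1m|lt_mk1] := leqP k1 m; last first.
  have [k1E|ne_k1] := eqVneq k1 m.+1.
    by move: lt12; rewrite k1E => lt12; apply: f_lt => //; lra.
  by move: lt12; rewrite ltNge natr_frac_le // ltn_neqAle eq_sym ne_k1.
have f_le s : 0 <= s <= 1 -> f m.+1 s <= f m 1.
  case/andP => s_ge0 s_le1; rewrite f_cont; have [->|s_neq0] := eqVneq s 0; first exact: lexx.
  by apply/ltW/f_lt => //; rewrite lt_def s_neq0.
have [lt1m|] := ltP (k1%:R + s1) (m%:R + 1).
  have h01 : 0 <= (1 : R) <= 1 by rewrite lexx ler01.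
  exact: le_lt_trans (f_le s2 hs2) (IH 1 (ltnW hk2) h01 lt1m).
move=> ge1m; have k1E : k1 = m.
  apply/eqP; rewrite eqn_leq k1m /= leqNgt; apply/negP => lt_k1m.
  by have := @natr_frac_le k1 s1 m 0 lt_k1m (lexx 0) s1_le1; lra.
have s1E : s1 = 1 by move: ge1m; rewrite k1E; lra.
rewrite k1E s1E f_cont; apply: f_lt => //.
by move: lt12; rewrite k1E s1E -natr1; lra.
Qed.

End RealArith.

Lemma neq_modn x y d : (x < y < x + d)%N -> x != y %[mod d].
Proof.
case/andP=> lt_xy lt_yx; rewrite -(subnKC (ltnW lt_xy)) -{1}[x]addn0 eqn_modDl mod0n.
by rewrite modn_small ?subn_eq0 -?ltnNge //; lia.
Qed.

Lemma eqmodS x y d : x = y %[mod d] -> x.+1 = y.+1 %[mod d].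
Proof. by move=> e; rewrite -[x.+1]addn1 -[y.+1]addn1 -modnDml e modnDml. Qed.

Section Heights.
Variables (R : rcfType) (v : nat -> pt R) (n : nat).

Definition height (k : nat) (X : pt R) : R := - cross (edir v n k) (psub X (V v n k)).

Definition edge_pt (k : nat) (s : R) : pt R := padd (V v n k) (pscale s (edir v n k)).

Ltac pt_ring :=
  unfold height, edge_pt, padd, psub, pscale, cross; cbn [fst snd];
  repeat match goal with |- context [fst ?P] => case: P => [? ?]; cbn [fst snd] end;
  first [ring | congr (_, _); ring].

Lemma V_eqmod x y : x = y %[mod n] -> V v n x = V v n y.
Proof. by rewrite /V => ->. Qed.

Lemma edir_eqmod x y : x = y %[mod n] -> edir v n x = edir v n y.
Proof.
by move=> e; rewrite /edir (V_eqmod e) (V_eqmod (eqmodS e)).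
Qed.

Lemma height_eqmod x y : x = y %[mod n] -> height x =1 height y.
Proof. by move=> e X; rewrite /height (V_eqmod e) (edir_eqmod e). Qed.

Lemma V_addn k : V v n (k + n) = V v n k.
Proof. by apply: V_eqmod; rewrite modnDr. Qed.

Lemma edge_pt0 k : edge_pt k 0 = V v n k.
Proof. by pt_ring. Qed.

Lemma edge_pt1 k : edge_pt k 1 = V v n k.+1.
Proof. by rewrite /edge_pt /edir; pt_ring. Qed.

Lemma edge_pt_succ k : edge_pt k 1 = edge_pt k.+1 0.
Proof. by rewrite edge_pt1 edge_pt0. Qed.

Lemma edge_pt_shift k s s' : edge_pt k s' = padd (edge_pt k s) (pscale (s' - s) (edir v n k)).
Proof. by pt_ring. Qed.

Lemma height_padd k P d s : height k (padd P (pscale s d)) = height k P - s * cross (edir v n k) d.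
Proof. by pt_ring. Qed.

Lemma cross_edge_pt k s s' X :
  cross (psub (edge_pt k s) (edge_pt k s')) (psub X (edge_pt k s')) = (s' - s) * height k X.
Proof. by pt_ring. Qed.

Lemma cross_antisym (a b : pt R) : cross a b = - cross b a.
Proof. by pt_ring. Qed.

Lemma height_V k : height k (V v n k) = 0.
Proof. by pt_ring. Qed.

Lemma height_V_succ k : height k (V v n k.+1) = 0.
Proof. by rewrite -edge_pt1; pt_ring. Qed.

Lemma height_edge_pt m k s :
  height m (edge_pt k s) = (1 - s) * height m (V v n k) + s * height m (V v n k.+1).
Proof. by rewrite -edge_pt1; pt_ring. Qed.

Lemma height_edge_pt_self k s : height k (edge_pt k s) = 0.
Proof. by pt_ring. Qed.

Lemma height_pluecker i j m X Y :
  cross (edir v n i) (edir v n j) * (height m X - height m Y) =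
  cross (edir v n i) (edir v n m) * (height j X - height j Y)
  - cross (edir v n j) (edir v n m) * (height i X - height i Y).
Proof. by pt_ring. Qed.

Lemma height_shift_cross i j X d s :
  height i X * height j (padd X (pscale s d)) - height i (padd X (pscale s d)) * height j X
  = s * (cross (edir v n i) d * height j X - cross (edir v n j) d * height i X).
Proof. by pt_ring. Qed.

Lemma height_inj i j X Y : cross (edir v n i) (edir v n j) != 0 ->
  height i X = height i Y -> height j X = height j Y -> X = Y.
Proof.
move=> cij ei ej.
have e1 : cross (edir v n i) (edir v n j) * (X.1 - Y.1) =
    (edir v n i).1 * (height j X - height j Y) - (edir v n j).1 * (height i X - height i Y).
  by pt_ring.
have e2 : cross (edir v n i) (edir v n j) * (X.2 - Y.2) =
    (edir v n i).2 * (height j X - height j Y) - (edir v n j).2 * (height i X - height i Y).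
  by pt_ring.
move: e1 e2; rewrite ei ej !subrr !mulr0 subr0.
move=> /eqP; rewrite mulf_eq0 (negbTE cij) subr_eq0 => /eqP e1.
move=> /eqP; rewrite mulf_eq0 (negbTE cij) subr_eq0 => /eqP e2.
by rewrite [X]surjective_pairing e1 e2 -surjective_pairing.
Qed.

(* [M] has barycentric coordinates [(D - x - y, x, y) / D] in the triangle
   [I B J], where [D], [x], [y] are the cross products below. *)
Lemma height_bary k I B J M :
  cross (psub B I) (psub J I) * height k M =
  (cross (psub B I) (psub J I) - cross (psub M I) (psub J I) - cross (psub B I) (psub M I))
    * height k I
  + cross (psub M I) (psub J I) * height k B + cross (psub B I) (psub M I) * height k J.
Proof. by pt_ring. Qed.

Lemma cross_bary (I B J M : pt R) :
  cross (psub J B) (psub M B) =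
  cross (psub B I) (psub J I) - cross (psub M I) (psub J I) - cross (psub B I) (psub M I).
Proof. by pt_ring. Qed.

Lemma cross_V_succ q P : cross (psub (V v n q) P) (psub (V v n q.+1) P) = - height q P.
Proof. by rewrite -edge_pt1; pt_ring. Qed.

Lemma cross_edir_V p x : cross (edir v n p) (psub (V v n x) (V v n p)) = - height p (V v n x).
Proof. by rewrite /height opprK. Qed.

Lemma cross_pluecker (a b c d : pt R) :
  cross a c * cross d b = cross a b * cross d c + cross b c * cross d a.
Proof. by pt_ring. Qed.

Lemma dl_height k X : 0 <= height k X ->
  dl v n k X = height k X / Num.sqrt (dot (edir v n k) (edir v n k)).
Proof. by move=> h; rewrite /dl /dist_line -/(edir v n k) -[cross _ _]opprK normrN ger0_norm. Qed.

Lemma dl_eqmod x y : x = y %[mod n] -> dl v n x =1 dl v n y.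
Proof.
by move=> e X; rewrite /dl (V_eqmod e) (V_eqmod (eqmodS e)).
Qed.

Section Convex.
Hypothesis convex : convex_cw_polygon v n.

Lemma height_vertex_gt0_mod k p :
  p != k %[mod n] -> p != k.+1 %[mod n] -> 0 < height k (V v n p).
Proof.
have n_gt0 : (0 < n)%N by case: convex => /ltnW/ltnW.
have e : k %% n = k %[mod n] by rewrite modn_mod.
move=> hk hk1; have [_ /(_ (k %% n)%N (p %% n)%N)] := convex.
rewrite !ltn_pmod // -/(V v n p) (edir_eqmod e) (V_eqmod e) oppr_gt0.
by apply=> //; apply: contra hk1 => /eqP->; rewrite (eqmodS e).
Qed.

Lemma height_vertex_gt0 k p : (k.+1 < p < k + n)%N -> 0 < height k (V v n p).
Proof.
move=> hp; apply: height_vertex_gt0_mod; rewrite eq_sym; apply: neq_modn; lia.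
Qed.

Lemma height_vertex_ge0 k p : 0 <= height k (V v n p).
Proof.
have [e|hk] := eqVneq (p %% n)%N (k %% n)%N; first by rewrite (V_eqmod e) height_V.
have [e|hk1] := eqVneq (p %% n)%N (k.+1 %% n)%N; first by rewrite (V_eqmod e) height_V_succ.
exact/ltW/height_vertex_gt0_mod.
Qed.

Lemma height_edge_pt_ge0 m k s : 0 <= s <= 1 -> 0 <= height m (edge_pt k s).
Proof.
case/andP=> s_ge0 s_le1; rewrite height_edge_pt.
by apply: addr_ge0; apply: mulr_ge0; rewrite ?subr_ge0 ?height_vertex_ge0.
Qed.

Lemma inP_edge_pt k s : 0 <= s <= 1 -> inP v n (edge_pt k s).
Proof. by move=> hs q _; rewrite -oppr_ge0; apply: height_edge_pt_ge0. Qed.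

Lemma inP_height X k : inP v n X -> 0 <= height k X.
Proof.
have n_gt0 : (0 < n)%N by case: convex => /ltnW/ltnW.
move=> hX; rewrite (height_eqmod (esym (modn_mod k n))) oppr_ge0.
exact/hX/ltn_pmod.
Qed.

Lemma cross_vertices_lt0 p q r : (p < q < r)%N -> (r < p + n)%N ->
  cross (psub (V v n q) (V v n p)) (psub (V v n r) (V v n p)) < 0.
Proof.
elim: r => [|r IH] /andP[lt_pq lt_qr] lt_r; first by [].
have Vp_gt0 k : (p < k)%N -> (k.+1 < p + n)%N -> 0 < height k (V v n p).
  by move=> *; rewrite -V_addn; apply: height_vertex_gt0; lia.
have [->|ne_qr] := eqVneq q r.
  by rewrite cross_V_succ oppr_lt0 Vp_gt0 //; lia.
have := cross_pluecker (psub (V v n q) (V v n p)) (psub (V v n r) (V v n p))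
  (psub (V v n r.+1) (V v n p)) (edir v n p).
rewrite !cross_edir_V cross_V_succ.
have hqr : cross (psub (V v n q) (V v n p)) (psub (V v n r) (V v n p)) < 0 by apply: IH; lia.
have hr : 0 < height r (V v n p) by apply: Vp_gt0; lia.
have hpr : 0 < height p (V v n r) by apply: height_vertex_gt0; lia.
have hpr1 : 0 < height p (V v n r.+1) by apply: height_vertex_gt0; lia.
have hpq := height_vertex_ge0 p q.
(* both products on the right of the Pluecker identity are positive *)
nra.
Qed.

Lemma edir_dot_gt0 k : 0 < dot (edir v n k) (edir v n k).
Proof.
have : 0 < height k (V v n k.+2).
  by apply: height_vertex_gt0; case: convex => ? _; lia.
rewrite /height /dot /cross; case: (edir v n k) => a b /= h.
rewrite ltNge; apply/negP => h0.
have a0 : a = 0 by nra.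
have b0 : b = 0 by nra.
by move: h; rewrite a0 b0 !mul0r subrr oppr0 ltxx.
Qed.

Lemma disprod_height i j X : inP v n X ->
  disprod v n i j X = height i X * height j X /
    (Num.sqrt (dot (edir v n i) (edir v n i)) * Num.sqrt (dot (edir v n j) (edir v n j))).
Proof.
by move=> hX; rewrite /disprod !dl_height ?inP_height // mulrACA invfM.
Qed.

Lemma ltr_disprod i j X Y : inP v n X -> inP v n Y ->
  (disprod v n i j X < disprod v n i j Y) = (height i X * height j X < height i Y * height j Y).
Proof.
move=> hX hY; rewrite !disprod_height // ltr_pM2r // invr_gt0.
by apply: mulr_gt0; rewrite sqrtr_gt0 edir_dot_gt0.
Qed.

Lemma ler_disprod i j X Y : inP v n X -> inP v n Y ->
  (disprod v n i j X <= disprod v n i j Y) = (height i X * height j X <= height i Y * height j Y).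
Proof.
move=> hX hY; rewrite !disprod_height // ler_pM2r // invr_gt0.
by apply: mulr_gt0; rewrite sqrtr_gt0 edir_dot_gt0.
Qed.

End Convex.

End Heights.

(* Indices are shifted so that the arc runs from [v_a] through the edges
   [a, ..., a + L - 1] to [v_(a + L)]: then [e_i] is edge [a + L] and [e_j] is
   edge [a + n - 1], i.e. the edge just before [v_a].  [I = l_i /\ l_j] is the
   point of parameter [t0] on [l_i]. *)
Section Arc.
Variables (R : rcfType) (v : nat -> pt R) (n a b : nat) (t0 : R).
Hypothesis convex : convex_cw_polygon v n.

Local Notation L := (arc_len n a b).
Local Notation i := (a + arc_len n a b)%N.
Local Notation j := (a + n.-1)%N.
Local Notation h := (height v n).
Local Notation E k s := (edge_pt v n (a + k) s).
Local Notation I := (edge_pt v n i t0).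
Local Notation c := (cross (edir v n i) (edir v n j)).

Hypothesis L_lt : (L.+1 < n)%N.
Hypothesis c_neq0 : c != 0.
Hypothesis t0_ge1 : 1 <= t0.
Hypothesis I_on_lj : on_line v n j I.

Lemma n_ge3 : (3 <= n)%N. Proof. by case: convex. Qed.

Lemma height_i_I : h i I = 0.
Proof. exact: height_edge_pt_self. Qed.

Lemma height_j_I : h j I = 0.
Proof. by rewrite /height I_on_lj oppr0. Qed.

Lemma height_j_Vi : h j (V v n i) = - t0 * c.
Proof.
have := height_j_I; rewrite /edge_pt height_padd cross_antisym mulrN opprK.
by move/eqP; rewrite addr_eq0 => /eqP ->; rewrite mulNr.
Qed.

Lemma t0_gt0 : 0 < t0.
Proof. exact: lt_le_trans ltr01 t0_ge1. Qed.

Lemma c_lt0 : c < 0.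
Proof.
have := height_vertex_ge0 convex j i; rewrite height_j_Vi mulNr oppr_ge0.
by rewrite pmulr_rle0 ?t0_gt0 // le_eqVlt (negbTE c_neq0).
Qed.

Lemma L_gt0 : (0 < L)%N.
Proof.
rewrite lt0n; apply/eqP => L0; have := height_j_Vi.
have -> : V v n i = V v n j.+1 by rewrite L0 addn0 -V_addn; congr V; lia.
rewrite height_V_succ => /esym/eqP; rewrite mulNr oppr_eq0 mulf_eq0 (negbTE c_neq0).
by rewrite orbF gt_eqF // t0_gt0.
Qed.

Lemma height_pluecker_I m X :
  c * (h m X - h m I) = cross (edir v n i) (edir v n m) * h j X - cross (edir v n j) (edir v n m) * h i X.
Proof. by rewrite height_pluecker height_i_I height_j_I !subr0. Qed.


Lemma height_I_arc_gt0_adjacent k : L.+2 = n -> (k < L)%N -> 0 < h (a + k) I.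
Proof.
move=> adj hk; have ji : j = i.+1 by lia.
have t01 : t0 = 1.
  have hV : h j (V v n i.+1) = 0 by rewrite {1}ji height_V.
  have := height_j_I; rewrite height_edge_pt hV height_j_Vi mulr0 addr0.
  move/eqP; rewrite !mulf_eq0 oppr_eq0 (negbTE c_neq0) (gt_eqF t0_gt0) subr_eq0 !orbF.
  by move/eqP.
by rewrite t01 edge_pt1 -ji; apply: (height_vertex_gt0 convex); lia.
Qed.

(* In barycentric coordinates for the triangle [I], [B = v_(i+1)], [J = v_j],
   the vertex [M = v_(a+k)] lies in the angle at [I] ([x, y >= 0]) and beyond
   [BJ] ([x + y > D]).  The height over [l_(a+k)] vanishes at [M] and is positive
   at [B] and [J], so it must be positive at [I]. *)
Lemma height_I_arc_gt0_far k : (L.+2 < n)%N -> (k < L)%N -> 0 < h (a + k) I.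
Proof.
move=> far hk; have L0 := L_gt0.
set B := V v n i.+1; set J := V v n j; set M := V v n (a + k).
have hiJ : 0 < h i J by apply: (height_vertex_gt0 convex); lia.
have hjB : 0 < h j B by rewrite /B -V_addn; apply: (height_vertex_gt0 convex); lia.
have hmB : 0 < h (a + k) B by apply: (height_vertex_gt0 convex); lia.
have hmJ : 0 < h (a + k) J by apply: (height_vertex_gt0 convex); lia.
have t0_gt1 : 1 < t0.
  rewrite lt_def t0_ge1 andbT; apply: contraTneq hjB => t01.
  by rewrite /B -edge_pt1 -t01 height_j_I ltxx.
have D_gt0 : 0 < cross (psub B I) (psub J I).
  by rewrite /B -edge_pt1 cross_edge_pt mulr_gt0 // subr_gt0.
set D := cross (psub B I) (psub J I) in D_gt0 *.
set x := cross (psub M I) (psub J I); set y := cross (psub B I) (psub M I).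
have y_ge0 : 0 <= y.
  have := height_bary v n i I B J M.
  rewrite height_i_I /B height_V_succ -/B !mulr0 !add0r => e.
  rewrite -(pmulr_lge0 _ hiJ) -e; apply: mulr_ge0; first exact: ltW.
  exact: height_vertex_ge0.
have x_ge0 : 0 <= x.
  have := height_bary v n j I B J M.
  rewrite height_j_I /J height_V -/J !mulr0 addr0 add0r => e.
  rewrite -(pmulr_lge0 _ hjB) -e; apply: mulr_ge0; first exact: ltW.
  exact: height_vertex_ge0.
have BJM_lt0 : cross (psub J B) (psub M B) < 0.
  by rewrite /M -[V v n (a + k)]V_addn; apply: (cross_vertices_lt0 convex); lia.
have Dxy : D < x + y by move: BJM_lt0; rewrite (cross_bary I) -/D -/x -/y; lra.
apply: (apex_gt0 D_gt0 x_ge0 y_ge0 Dxy hmB hmJ).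
by rewrite -height_bary /M height_V mulr0.
Qed.

Lemma height_I_arc_gt0 k : (k < L)%N -> 0 < h (a + k) I.
Proof.
case: (ltngtP L.+2 n) => [far|n_lt|adj].
- exact: height_I_arc_gt0_far.
- by exfalso; lia.
- exact: height_I_arc_gt0_adjacent.
Qed.

(* In the coordinates [(u, w) = (h i, h j)], the line [l_m] of an arc edge is
   [al_m * w - be_m * u = - c * h m I] and [P] lies on the side [<=]. *)
Lemma arc_support_gt0 k : (k < L)%N -> 0 < - c * h (a + k) I.
Proof.
by move=> hk; apply: mulr_gt0; [rewrite oppr_gt0; exact: c_lt0 | exact: height_I_arc_gt0].
Qed.

Lemma arc_support m X : 0 <= h m X ->
  cross (edir v n i) (edir v n m) * h j X - cross (edir v n j) (edir v n m) * h i X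
  <= - c * h m I.
Proof. by rewrite -height_pluecker_I => hX; have := c_lt0; nra. Qed.

Lemma arc_support_eq k s :
  cross (edir v n i) (edir v n (a + k)) * h j (E k s)
  - cross (edir v n j) (edir v n (a + k)) * h i (E k s) = - c * h (a + k) I.
Proof. by rewrite -height_pluecker_I height_edge_pt_self sub0r mulrN mulNr. Qed.

Lemma on_arcP t X : on_arc v n a b t X ->
  exists k s, [/\ (k < L)%N, 0 <= s <= 1, t = k%:R + s & X = E k s].
Proof.
case=> k [s [[hk | [-> ->]] [s0 [s1 [-> ->]]]]]; first by exists k, s; rewrite s0 s1.
have L0 := L_gt0; exists L.-1, 1; split.
- by rewrite prednK.
- by rewrite lexx ler01.
- by rewrite addr0 natr1 prednK.
- by rewrite edge_pt_succ -addnS prednK.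
Qed.

Lemma on_arc_edge_pt k s : (k < L)%N -> 0 <= s <= 1 -> on_arc v n a b (k%:R + s) (E k s).
Proof. by move=> hk /andP[s0 s1]; exists k, s; split; [left|]. Qed.

Lemma arc_inP t X : on_arc v n a b t X -> inP v n X.
Proof. by case/on_arcP=> k [s [_ hs _ ->]]; apply: inP_edge_pt. Qed.

Lemma arc_range t X : on_arc v n a b t X -> 0 <= t <= L%:R.
Proof.
case/on_arcP=> k [s [hk /andP[s0 s1] -> _]]; apply/andP; split.
  by rewrite addr_ge0.
have : k.+1%:R <= L%:R :> R by rewrite ler_nat.
by rewrite -natr1; lra.
Qed.

Lemma arc_exists t : 0 <= t <= L%:R -> exists X, on_arc v n a b t X.
Proof.
move=> ht; have [k [s [hk hs ->]]] := nat_frac_split L_gt0 ht.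
by exists (E k s); apply: on_arc_edge_pt.
Qed.

Lemma arc_unique t X X' : on_arc v n a b t X -> on_arc v n a b t X' -> X = X'.
Proof.
case/on_arcP=> k [s [_ hs -> ->]] /on_arcP[k' [s' [_ hs' e ->]]].
apply: (broken_line_eq (f := fun k s => E k s)) => // m.
by rewrite addnS -edge_pt_succ.
Qed.

Lemma arc_uw_gt0 k s : (k < L)%N -> 0 <= s <= 1 -> 0 < h i (E k s) + h j (E k s).
Proof.
move=> hk hs; have u_ge0 := height_edge_pt_ge0 convex i (a + k) hs.
have w_ge0 := height_edge_pt_ge0 convex j (a + k) hs.
rewrite lt_def addr_ge0 // andbT paddr_eq0 //; apply/negP => /andP[/eqP u0 /eqP w0].
have := arc_support_eq k s; rewrite u0 w0 !mulr0 subrr.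
by have := c_lt0; have := height_I_arc_gt0 hk; nra.
Qed.

Lemma arc_edge_cross_lt k s s' : (k < L)%N -> 0 <= s -> s < s' -> s' <= 1 ->
  h i (E k s') * h j (E k s) < h i (E k s) * h j (E k s').
Proof.
move=> hk s0 ss' s1; rewrite -subr_gt0 (edge_pt_shift v n (a + k) s s') height_shift_cross.
by rewrite arc_support_eq; apply: mulr_gt0; [rewrite subr_gt0 | exact: arc_support_gt0].
Qed.

(* The ratio [h i / (h i + h j)] orders the arc points by their direction
   seen from [I]; it decreases along each edge of the arc. *)
Lemma arc_cross_lt t1 t2 X1 X2 : on_arc v n a b t1 X1 -> on_arc v n a b t2 X2 -> t1 < t2 ->
  h i X2 * h j X1 < h i X1 * h j X2.
Proof.
case/on_arcP=> k1 [s1 [hk1 hs1 -> ->]] /on_arcP[k2 [s2 [hk2 hs2 -> ->]]] lt12.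
rewrite -(ltr_ratio (arc_uw_gt0 hk1 hs1) (arc_uw_gt0 hk2 hs2)).
pose f k s := h i (E k s) / (h i (E k s) + h j (E k s)).
apply: (broken_line_lt (f := f) (N := L)) => //.
  by move=> k; rewrite /f addnS -edge_pt_succ.
move=> k s s' hk s_ge0 ss' s'_le1; have s'_ge0 : 0 <= s' by lra.
rewrite /f ltr_ratio ?arc_edge_cross_lt // arc_uw_gt0 //; apply/andP; lra.
Qed.

Lemma arc_no_interior_min t1 t2 t3 X1 X2 X3 :
  on_arc v n a b t1 X1 -> on_arc v n a b t2 X2 -> on_arc v n a b t3 X3 -> t1 < t2 -> t2 < t3 ->
  disprod v n i j X1 < disprod v n i j X2 \/ disprod v n i j X3 < disprod v n i j X2.
Proof.
move=> a1 a2 a3 lt12 lt23.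
have P1 := arc_inP a1; have P2 := arc_inP a2; have P3 := arc_inP a3.
rewrite !(ltr_disprod convex) //.
case/on_arcP: (a2) => k [s [hk _ _ eX2]]; subst X2.
apply: (@mul_no_interior_min _ (- c * h (a + k) I)
  (cross (edir v n i) (edir v n (a + k))) (cross (edir v n j) (edir v n (a + k))));
  rewrite ?inP_height //.
- exact: arc_support_gt0.
- exact: arc_support (inP_height convex _ P1).
- exact: arc_support_eq.
- exact: arc_support (inP_height convex _ P3).
- exact: arc_cross_lt a1 a2 lt12.
- exact: arc_cross_lt a2 a3 lt23.
- exact: arc_cross_lt a1 a3 (lt_trans lt12 lt23).
Qed.

Section Maximizer.
Variable Z : pt R.
Hypothesis Z_inP : inP v n Z.
Hypothesis Z_max : forall X, inP v n X -> disprod v n i j X <= disprod v n i j Z.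

Lemma maximizer_uw_gt0 : 0 < h i Z /\ 0 < h j Z.
Proof.
have L0 := L_gt0; have n3 := n_ge3.
have half : 0 < (2^-1 : R) < 1 by rewrite invr_gt0 ltr0n invf_lt1 ?ltr1n.
have hs : 0 <= (2^-1 : R) <= 1 by case/andP: half => *; apply/andP; split; apply: ltW.
have uM : 0 < h i (E 0 2^-1).
  have := height_vertex_ge0 convex i a.+1.
  have : 0 < h i (V v n a) by rewrite -V_addn; apply: (height_vertex_gt0 convex); lia.
  by rewrite height_edge_pt addn0; nra.
have wM : 0 < h j (E 0 2^-1).
  have := height_vertex_ge0 convex j a.
  have : 0 < h j (V v n a.+1) by rewrite -V_addn; apply: (height_vertex_gt0 convex); lia.
  by rewrite height_edge_pt addn0; nra.
have := Z_max (inP_edge_pt convex (a + 0) hs).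
rewrite (ler_disprod convex _ _ (inP_edge_pt convex _ hs) Z_inP).
have := inP_height convex i Z_inP; have := inP_height convex j Z_inP.
by move=> *; split; nra.
Qed.

(* The arc crosses the ray from [I] through [Z] (where [f] changes sign); on the
   crossing edge the supporting line caps the scale along that ray, so
   maximality of [Z] puts [Z] on the edge. *)
Lemma maximizer_on_arc : exists tZ, on_arc v n a b tZ Z.
Proof.
have [uZ wZ] := maximizer_uw_gt0.
pose f k := h i Z * h j (V v n (a + k)) - h i (V v n (a + k)) * h j Z.
have f0 : f 0%N <= 0.
  rewrite /f addn0 -V_addn (_ : (a + n = j.+1)%N); last by have := n_ge3; lia.
  rewrite height_V_succ mulr0 sub0r oppr_le0; apply: mulr_ge0; last exact: ltW.
  exact: height_vertex_ge0.
have fL : 0 <= f L.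
  rewrite /f height_V mul0r subr0; apply: mulr_ge0; first exact: ltW.
  exact: height_vertex_ge0.
have [k [hk fk fk1]] := sign_change_nat L_gt0 f0 fL.
have [s hs fs] := affine_root01 fk fk1.
have eX : h i Z * h j (E k s) = h i (E k s) * h j Z.
  by apply/eqP; rewrite -subr_eq0 -fs /f !height_edge_pt addnS; apply/eqP; ring.
have := Z_max (inP_edge_pt convex (a + k) hs).
rewrite (ler_disprod convex _ _ (inP_edge_pt convex _ hs) Z_inP) => le.
have [eu ew] := mul_ray_max_eq (G := - c * h (a + k) I)
  (al := cross (edir v n i) (edir v n (a + k))) (be := cross (edir v n j) (edir v n (a + k)))
  (arc_support_gt0 hk) uZ wZ
  (height_edge_pt_ge0 convex _ _ hs) (height_edge_pt_ge0 convex _ _ hs) eX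
  (arc_support_eq k s) (arc_support (inP_height convex _ Z_inP)) le.
exists (k%:R + s); rewrite -(@height_inj _ v n i j _ _ c_neq0 eu ew).
exact: on_arc_edge_pt.
Qed.

Lemma arc_increasing_to_max tZ t1 t2 X1 X2 : on_arc v n a b tZ Z ->
  on_arc v n a b t1 X1 -> on_arc v n a b t2 X2 -> t1 < t2 -> t2 <= tZ ->
  disprod v n i j X1 < disprod v n i j X2.
Proof.
move=> aZ a1 a2 lt12; rewrite le_eqVlt => /predU1P[e|lt2Z]; last first.
  case: (arc_no_interior_min a1 a2 aZ lt12 lt2Z) => //.
  by rewrite ltNge (Z_max (arc_inP a2)).
rewrite e in a2 lt12; rewrite (arc_unique a2 aZ).
have [|X' a'] := @arc_exists ((t1 + tZ) / 2).
  by move: (arc_range a1) (arc_range aZ) => /andP[? ?] /andP[? ?]; apply/andP; split; lra.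
have lt1m : t1 < (t1 + tZ) / 2 by lra.
have ltmZ : (t1 + tZ) / 2 < tZ by lra.
have [lt1'|] := arc_no_interior_min a1 a' aZ lt1m ltmZ.
  exact: lt_le_trans lt1' (Z_max (arc_inP a')).
by rewrite ltNge (Z_max (arc_inP a')).
Qed.

Lemma arc_decreasing_from_max tZ t1 t2 X1 X2 : on_arc v n a b tZ Z ->
  on_arc v n a b t1 X1 -> on_arc v n a b t2 X2 -> tZ <= t1 -> t1 < t2 ->
  disprod v n i j X2 < disprod v n i j X1.
Proof.
move=> aZ a1 a2; rewrite le_eqVlt => /predU1P[e|ltZ1] lt12; last first.
  case: (arc_no_interior_min aZ a1 a2 ltZ1 lt12) => //.
  by rewrite ltNge (Z_max (arc_inP a1)).
rewrite -e in a1 lt12; rewrite (arc_unique a1 aZ).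
have [|X' a'] := @arc_exists ((tZ + t2) / 2).
  by move: (arc_range aZ) (arc_range a2) => /andP[? ?] /andP[? ?]; apply/andP; split; lra.
have ltZm : tZ < (tZ + t2) / 2 by lra.
have ltm2 : (tZ + t2) / 2 < t2 by lra.
have [|lt2'] := arc_no_interior_min aZ a' a2 ltZm ltm2.
  by rewrite ltNge (Z_max (arc_inP a')).
exact: lt_le_trans lt2' (Z_max (arc_inP a')).
Qed.

Lemma arc_unimodal : exists tZ : R,
  on_arc v n a b tZ Z /\
  (forall t1 t2 X1 X2, on_arc v n a b t1 X1 -> on_arc v n a b t2 X2 ->
     t1 < t2 -> t2 <= tZ -> disprod v n i j X1 < disprod v n i j X2) /\
  (forall t1 t2 X1 X2, on_arc v n a b t1 X1 -> on_arc v n a b t2 X2 ->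
     tZ <= t1 -> t1 < t2 -> disprod v n i j X2 < disprod v n i j X1).
Proof.
have [tZ aZ] := maximizer_on_arc; exists tZ; split => //.
by split=> t1 t2 X1 X2; [exact: arc_increasing_to_max | exact: arc_decreasing_from_max].
Qed.

End Maximizer.

End Arc.

Theorem lemma5 (R : rcfType) (n : nat) (v : nat -> pt R) (i j : nat) (Z : pt R) :
  convex_cw_polygon v n ->
  no_parallel_edges v n ->
  (i < n)%N -> (j < n)%N ->
  prec v n i j ->
  (* Z = Z_i^j : a (the) maximizer of disprod_{l_i,l_j} over P *)
  inP v n Z ->
  (forall X, inP v n X -> disprod v n i j X <= disprod v n i j Z) ->
  exists tZ : R,
    on_arc v n (j.+1 %% n) i tZ Z /\
    (forall (t1 t2 : R) (X1 X2 : pt R),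
        on_arc v n (j.+1 %% n) i t1 X1 -> on_arc v n (j.+1 %% n) i t2 X2 ->
        t1 < t2 -> t2 <= tZ -> disprod v n i j X1 < disprod v n i j X2) /\
    (forall (t1 t2 : R) (X1 X2 : pt R),
        on_arc v n (j.+1 %% n) i t1 X1 -> on_arc v n (j.+1 %% n) i t2 X2 ->
        tZ <= t1 -> t1 < t2 -> disprod v n i j X2 < disprod v n i j X1).
Proof.
move=> convex no_par hi hj [hij [t0 [t0_ge1 I_on_lj]]] Z_inP Z_max.
set a := (j.+1 %% n)%N; set L := arc_len n a i.
have n_gt0 : (0 < n)%N by case: convex => /ltnW/ltnW.
have a_lt : (a < n)%N by exact: ltn_pmod.
have ei : (a + L = i %[mod n])%N by rewrite modnDmr subnKC ?modnDr //; lia.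
have ej : (a + n.-1 = j %[mod n])%N.
  by rewrite modnDml (_ : j.+1 + n.-1 = j + n)%N ?modnDr //; lia.
have L_lt : (L.+1 < n)%N.
  have : L != n.-1.
    by apply: contra_neq hij => eL; rewrite -(modn_small hi) -(modn_small hj) -ei -ej eL.
  have : (L < n)%N by exact: ltn_pmod.
  lia.
have dE X : disprod v n i j X = disprod v n (a + L) (a + n.-1) X.
  by rewrite /disprod (dl_eqmod v ei) (dl_eqmod v ej).
have c_neq0 : cross (edir v n (a + L)) (edir v n (a + n.-1)) != 0.
  by rewrite (edir_eqmod v ei) (edir_eqmod v ej); exact: no_par.
have I_on : on_line v n (a + n.-1) (edge_pt v n (a + L) t0).
  by rewrite /on_line /edge_pt (edir_eqmod v ei) (V_eqmod v ei) (edir_eqmod v ej) (V_eqmod v ej).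
have Z_max' X : inP v n X -> disprod v n (a + L) (a + n.-1) X <= disprod v n (a + L) (a + n.-1) Z.
  by rewrite -!dE; exact: Z_max.
have [tZ [aZ [inc dec]]] := arc_unimodal convex L_lt c_neq0 t0_ge1 I_on Z_inP Z_max'.
exists tZ; split=> //; split=> t1 t2 X1 X2 a1 a2 h1 h2; rewrite !dE.
- exact: inc a1 a2 h1 h2.
- exact: dec a1 a2 h1 h2.
Qed.
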